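(* For all positive integers $m$, all real numbers $x_1,\dots,x_m,y_1,\dots,y_m\ge0$ and all real $d>1$, \[\max_{j\in\{1,\dots,m\}}\Big((d-1)x_j^{1/(d-1)}+\sum_{i=1}^j y_i\Big)\ \ge\ d\Big(\frac{1}{\mathrm{e}}\sum_{j=1}^m x_jy_j\Big)^{1/d}.\] *)

From Stdlib Require Import Reals Lra.
Open Scope R_scope.

(* Real power x^a for x >= 0 and a > 0, with the convention 0^a = 0
   (Stdlib's Rpower 0 a = exp (a * ln 0) = 1, which is wrong at 0). *)
Definition rpow (x a : R) : R :=
  if Req_EM_T x 0 then 0 else Rpower x a.

Fixpoint max_1_to (f : nat -> R) (m : nat) : R :=
  match m with
  | O => f 1%nat
  | S O => f 1%nat
  | S k => Rmax (max_1_to f k) (f m)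
  end.

Definition sum_1_to (g : nat -> R) (j : nat) : R :=
  sum_f 1 j g.

(* Put a := d - 1, let M be the maximum and S_j := y_1 + ... + y_j.  The j-th
   term of the maximum gives a x_j^(1/a) <= M - S_j, i.e. a^a x_j <= (M - S_j)^a.
   By Bernoulli's inequality (convexity of t |-> t^d),
   d (M - S_j)^a y_j <= (M - S_(j-1))^d - (M - S_j)^d, so the sum of the
   d a^a x_j y_j telescopes to at most M^d.  Finally d^d <= e d a^a because
   (1 + 1/a)^a <= e, and taking d-th roots gives the claim. *)

From Stdlib Require Import Reals Lra Lia.
Open Scope R_scope.

Lemma exp_le_compat x y : x <= y -> exp x <= exp y.
Proof. intros [Hlt|<-]; [left; now apply exp_increasing | right; reflexivity]. Qed.

Lemma ln_le_sub1 x : 0 < x -> ln x <= x - 1.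
Proof. intros Hx. pose proof (exp_ineq1_le (ln x)) as Hexp. rewrite exp_ln in Hexp; lra. Qed.

(* The tangent-line bounds e^((d-1)t) >= 1 + (d-1)t and e^(-t) >= 1 - t give
   e^((d-1)t) + (d-1) e^(-t) >= d; multiply by e^t. *)
Lemma exp_Bernoulli t d : 1 <= d -> 1 + d * (exp t - 1) <= exp (d * t).
Proof.
  intros Hd.
  pose proof (exp_ineq1_le ((d - 1) * t)) as Hdt.
  pose proof (exp_ineq1_le (- t)) as Ht.
  assert (Hinv : exp t * exp (- t) = 1)
    by (rewrite <- exp_plus, Rplus_opp_r; apply exp_0).
  assert (Hsplit : exp (d * t) = exp t * exp ((d - 1) * t))
    by (rewrite <- exp_plus; f_equal; ring).
  assert (Hsum : d <= exp ((d - 1) * t) + (d - 1) * exp (- t)) by nra.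
  pose proof (exp_pos t).
  rewrite Hsplit. nra.
Qed.

Lemma Rpower_Bernoulli u d : 0 < u -> 1 <= d -> 1 + d * (u - 1) <= Rpower u d.
Proof.
  intros Hu Hd. unfold Rpower.
  rewrite <- (exp_ln u) at 1 by exact Hu.
  now apply exp_Bernoulli.
Qed.

Lemma rpow_0 a : rpow 0 a = 0.
Proof. unfold rpow. destruct (Req_EM_T 0 0); lra. Qed.

Lemma rpow_Rpower x a : 0 < x -> rpow x a = Rpower x a.
Proof. intros Hx. unfold rpow. destruct (Req_EM_T x 0); lra. Qed.

Lemma rpow_ge0 x a : 0 <= rpow x a.
Proof. unfold rpow. destruct (Req_EM_T x 0); [lra | left; apply exp_pos]. Qed.

Lemma rpow_gt0 x a : 0 < x -> 0 < rpow x a.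
Proof. intros Hx. rewrite rpow_Rpower by exact Hx. apply exp_pos. Qed.

Lemma rpow_le_compat x y a : 0 <= x <= y -> 0 <= a -> rpow x a <= rpow y a.
Proof.
  intros [[Hx|<-] Hxy] Ha.
  - rewrite !rpow_Rpower by lra. apply Rle_Rpower_l; lra.
  - rewrite rpow_0. apply rpow_ge0.
Qed.

Lemma rpow_mult_distr x y a :
  0 <= x -> 0 <= y -> rpow (x * y) a = rpow x a * rpow y a.
Proof.
  intros [Hx|<-] [Hy|<-]; rewrite ?Rmult_0_l, ?Rmult_0_r, ?rpow_0; try ring.
  rewrite !rpow_Rpower by (try apply Rmult_lt_0_compat; lra).
  now rewrite Rpower_mult_distr.
Qed.

Lemma rpow_rpow_inv x a b : 0 <= x -> a * b = 1 -> rpow (rpow x a) b = x.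
Proof.
  intros [Hx|<-] Hab; [|now rewrite !rpow_0].
  rewrite !rpow_Rpower by (try apply rpow_gt0; lra).
  now rewrite Rpower_mult, Hab, Rpower_1.
Qed.

Lemma rpow_sub1_mul x a : 0 < x -> rpow x (a - 1) * x = rpow x a.
Proof.
  intros Hx. rewrite !rpow_Rpower by exact Hx.
  rewrite <- (Rpower_1 x Hx) at 2. rewrite <- Rpower_plus. f_equal. ring.
Qed.

Lemma rpow_1_plus_inv_le_exp1 a : 0 < a -> rpow (1 + / a) a <= exp 1.
Proof.
  intros Ha. pose proof (Rinv_0_lt_compat a Ha) as Hinv.
  rewrite rpow_Rpower by lra. apply exp_le_compat.
  pose proof (ln_le_sub1 (1 + / a) ltac:(lra)) as Hln.
  assert (Hscaled : a * ln (1 + / a) <= a * / a) by (apply Rmult_le_compat_l; lra).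
  rewrite Rinv_r in Hscaled; lra.
Qed.

Lemma rpow_increment_ge v y d :
  0 <= v -> 0 <= y -> 1 <= d -> d * rpow v (d - 1) * y <= rpow (v + y) d - rpow v d.
Proof.
  intros [Hv|<-] Hy Hd.
  2: { rewrite !rpow_0, Rplus_0_l. pose proof (rpow_ge0 y d). lra. }
  set (u := 1 + y / v).
  assert (Hu : 0 < u).
  { assert (0 <= y / v) by (apply Rmult_le_pos; [lra | left; now apply Rinv_0_lt_compat]).
    unfold u; lra. }
  assert (Hvu : v * (u - 1) = y) by (unfold u; field; lra).
  assert (Hsplit : rpow (v + y) d = rpow v d * rpow u d).
  { rewrite <- rpow_mult_distr by lra. f_equal. lra. }
  assert (Hvd : rpow v d = rpow v (d - 1) * v) by (now rewrite rpow_sub1_mul).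
  pose proof (Rpower_Bernoulli u d Hu Hd) as HB.
  rewrite <- rpow_Rpower in HB by lra.
  assert (Hscale : rpow v d * (1 + d * (u - 1)) <= rpow v d * rpow u d)
    by (apply Rmult_le_compat_l; [apply rpow_ge0 | exact HB]).
  rewrite Hsplit.
  replace (rpow v d * (1 + d * (u - 1)))
    with (rpow v d + d * rpow v (d - 1) * (v * (u - 1))) in Hscale
    by (rewrite Hvd; ring).
  rewrite Hvu in Hscale. lra.
Qed.

Lemma rpow_le_of_scaled_root_le x a w :
  0 <= x -> 0 < a -> a * rpow x (1 / a) <= w -> rpow a a * x <= rpow w a.
Proof.
  intros Hx Ha Hw.
  assert (Hroot : 0 <= a * rpow x (1 / a))
    by (apply Rmult_le_pos; [lra | apply rpow_ge0]).
  rewrite <- (rpow_rpow_inv x (1 / a) a Hx) at 1 by (field; lra).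
  rewrite <- rpow_mult_distr by (try apply rpow_ge0; lra).
  apply rpow_le_compat; lra.
Qed.

Lemma term_le_rpow_diff x y w d :
  0 <= x -> 0 <= y -> 1 < d -> (d - 1) * rpow x (1 / (d - 1)) <= w ->
  x * y * (d * rpow (d - 1) (d - 1)) <= rpow (w + y) d - rpow w d.
Proof.
  intros Hx Hy Hd Hw.
  pose proof (rpow_le_of_scaled_root_le x (d - 1) w Hx ltac:(lra) Hw) as Hxw.
  eapply Rle_trans; [| apply rpow_increment_ge; [| exact Hy | lra]].
  - replace (x * y * (d * rpow (d - 1) (d - 1)))
      with (d * (rpow (d - 1) (d - 1) * x) * y) by ring.
    apply Rmult_le_compat_r; [exact Hy|].
    apply Rmult_le_compat_l; [lra | exact Hxw].
  - pose proof (rpow_ge0 x (1 / (d - 1))). nra.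
Qed.

Lemma rpow_self_le_exp1_mul d : 1 < d -> rpow d d <= exp 1 * (d * rpow (d - 1) (d - 1)).
Proof.
  intros Hd.
  assert (Hd1 : rpow d d = d * rpow d (d - 1))
    by (rewrite <- rpow_sub1_mul by lra; ring).
  assert (Hfactor : rpow d (d - 1) = rpow (d - 1) (d - 1) * rpow (1 + / (d - 1)) (d - 1)).
  { rewrite <- rpow_mult_distr by
      (try (pose proof (Rinv_0_lt_compat (d - 1) ltac:(lra))); lra).
    f_equal. field. lra. }
  pose proof (rpow_1_plus_inv_le_exp1 (d - 1) ltac:(lra)) as He.
  pose proof (rpow_ge0 (d - 1) (d - 1)).
  rewrite Hd1, Hfactor, <- Rmult_assoc, (Rmult_comm (exp 1)).
  apply Rmult_le_compat_l; [nra | exact He].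
Qed.

Lemma scaled_root_le_of_rpow_ge P M d :
  1 < d -> 0 <= P -> 0 <= M -> P * (d * rpow (d - 1) (d - 1)) <= rpow M d ->
  d * rpow (/ exp 1 * P) (1 / d) <= M.
Proof.
  intros Hd HP HM HPM.
  pose proof (rpow_self_le_exp1_mul d Hd) as Hdd.
  pose proof (exp_pos 1) as He.
  assert (HeP : 0 <= / exp 1 * P)
    by (apply Rmult_le_pos; [left; now apply Rinv_0_lt_compat | exact HP]).
  assert (Hle : / exp 1 * P * rpow d d <= rpow M d).
  { assert (/ exp 1 * P * rpow d d <= / exp 1 * P * (exp 1 * (d * rpow (d - 1) (d - 1))))
      by (apply Rmult_le_compat_l; assumption).
    replace (/ exp 1 * P * (exp 1 * (d * rpow (d - 1) (d - 1))))
      with (P * (d * rpow (d - 1) (d - 1))) in H by (field; lra).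
    lra. }
  assert (Hroot : rpow (/ exp 1 * P * rpow d d) (1 / d) <= rpow (rpow M d) (1 / d)).
  { apply rpow_le_compat; [split; [|exact Hle] | left; apply Rdiv_lt_0_compat; lra].
    apply Rmult_le_pos; [exact HeP | apply rpow_ge0]. }
  rewrite rpow_mult_distr, !rpow_rpow_inv in Hroot
    by (try apply rpow_ge0; try field; lra).
  lra.
Qed.

Fixpoint sum_upto (g : nat -> R) (j : nat) : R :=
  match j with
  | O => 0
  | S k => sum_upto g k + g (S k)
  end.

(* [sum_1_to g 0] is the junk value [g 1], hence the restriction [1 <= j]. *)
Lemma sum_1_to_upto g j : (1 <= j)%nat -> sum_1_to g j = sum_upto g j.
Proof.
  intros Hj. destruct j as [|j]; [lia|]. clear Hj.
  unfold sum_1_to, sum_f. replace (S j - 1)%nat with j by lia.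
  induction j as [|j IH]; simpl; [ring|].
  rewrite IH. f_equal. f_equal. lia.
Qed.

Lemma sum_upto_ge0 g m :
  (forall j, (1 <= j <= m)%nat -> 0 <= g j) -> 0 <= sum_upto g m.
Proof.
  induction m as [|m IH]; intros Hg; simpl; [lra|].
  assert (0 <= g (S m)) by (apply Hg; lia).
  assert (0 <= sum_upto g m) by (apply IH; intros j Hj; apply Hg; lia).
  lra.
Qed.

Lemma sum_upto_mult_distr_r g k m :
  sum_upto (fun j => g j * k) m = sum_upto g m * k.
Proof. induction m as [|m IH]; simpl; [ring | rewrite IH; ring]. Qed.

Lemma sum_upto_le_telescope c F m :
  (forall j, (1 <= j <= m)%nat -> c j <= F (pred j) - F j) ->
  sum_upto c m <= F O - F m.
Proof.
  induction m as [|m IH]; intros Hc; simpl; [lra|].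
  assert (c (S m) <= F m - F (S m)) by (apply Hc; lia).
  assert (sum_upto c m <= F O - F m) by (apply IH; intros j Hj; apply Hc; lia).
  lra.
Qed.

Lemma max_1_to_ge f m j : (1 <= j <= m)%nat -> f j <= max_1_to f m.
Proof.
  induction m as [|[|m] IH]; intros Hj; [lia | |].
  - replace j with 1%nat by lia. simpl. lra.
  - destruct (Nat.eq_dec j (S (S m))) as [->|Hne].
    + apply Rmax_r.
    + eapply Rle_trans; [apply IH; lia | apply Rmax_l].
Qed.

Theorem lemma3p9 (m : nat) (x y : nat -> R) (d : R) :
  (1 <= m)%nat ->
  (forall i, (1 <= i <= m)%nat -> 0 <= x i) ->
  (forall i, (1 <= i <= m)%nat -> 0 <= y i) ->
  1 < d ->
  max_1_to (fun j => (d - 1) * rpow (x j) (1 / (d - 1)) + sum_1_to y j) m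
    >= d * rpow (/ exp 1 * sum_1_to (fun j => x j * y j) m) (1 / d).
Proof.
  intros Hm Hx Hy Hd.
  set (M := max_1_to _ m).
  assert (HM : forall j, (1 <= j <= m)%nat ->
            (d - 1) * rpow (x j) (1 / (d - 1)) <= M - sum_upto y j).
  { intros j Hj. rewrite <- sum_1_to_upto by lia.
    pose proof (max_1_to_ge (fun j => (d - 1) * rpow (x j) (1 / (d - 1)) + sum_1_to y j) m j Hj)
      as Hmax.
    fold M in Hmax. lra. }
  assert (Htelescope : sum_upto (fun j => x j * y j) m * (d * rpow (d - 1) (d - 1))
                       <= rpow M d - rpow (M - sum_upto y m) d).
  { rewrite <- sum_upto_mult_distr_r.
    replace (rpow M d) with (rpow (M - sum_upto y O) d) by (simpl; f_equal; ring).
    apply (sum_upto_le_telescope _ (fun j => rpow (M - sum_upto y j) d)).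
    intros [|j] Hj; [lia|]. simpl.
    replace (M - sum_upto y j) with (M - (sum_upto y j + y (S j)) + y (S j)) by ring.
    apply term_le_rpow_diff; [apply Hx | apply Hy | | apply (HM (S j))]; trivial. }
  assert (HM0 : 0 <= M).
  { pose proof (HM 1%nat ltac:(lia)) as HM1. pose proof (Hy 1%nat ltac:(lia)).
    pose proof (rpow_ge0 (x 1%nat) (1 / (d - 1))). simpl in HM1. nra. }
  pose proof (rpow_ge0 (M - sum_upto y m) d).
  apply Rle_ge, scaled_root_le_of_rpow_ge; trivial; rewrite sum_1_to_upto by trivial; [|lra].
  apply sum_upto_ge0. intros j Hj. apply Rmult_le_pos; [apply Hx | apply Hy]; trivial.
Qed.
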